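(* Let $q=p^h$ with $p>3$ prime, $q\ge 7$, and let $X,T$ be positive integers with $X+T\ge 3(q+2)$. Let $\mathcal{E}$ be an $\mathbb{F}_{q^2}$-maximal elliptic curve over $\mathbb{F}_{q^2}$ with affine equation $y^2=f(x)$, $\deg f=3$, and $\gamma=\#\{z\in\mathbb{F}_{q^2}: f(z)=0\}$. Define $$\mathcal{R}^{\mathcal{E}}_{\max}=\frac{L^{\mathcal{E}}}{L^{\mathcal{E}}+X+T+8},\qquad L^{\mathcal{E}}=2\left\lfloor\frac{\#\mathcal{E}(\mathbb{F}_{q^2})-(X+T+\gamma+9)}{4}\right\rfloor-1,$$ $$\mathcal{R}^{\mathcal{H}_q}_{\max}=\frac{L^{\mathcal{H}}}{L^{\mathcal{H}}+X+T+3q^2-q-2},\qquad L^{\mathcal{H}}=mq-\frac{q(q-1)}{2},\quad m=\left\lfloor\frac{q^3-3q^2+q+1-(X+T)}{2q}\right\rfloor.$$ Then $\mathcal{R}^{\mathcal{H}_q}_{\max}>\mathcal{R}^{\mathcal{E}}_{\max}$.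
   Context: An elliptic curve over $\mathbb{F}_{q^2}$ is $\mathbb{F}_{q^2}$-maximal if it has $q^2+1+2q$ rational points. $\mathcal{R}^{\mathcal{E}}_{\max}$ is the maximal rate of the known $X$-secure $T$-private PIR construction from the elliptic curve $\mathcal{E}$ (rate $L/(L+X+T+8)$), and $\mathcal{R}^{\mathcal{H}_q}_{\max}$ is the maximal rate of the PIR construction from the Hermitian curve $X^{q+1}=Y^q+Y$ over $\mathbb{F}_{q^2}$ (rate $L/N$ with $N=L+X+T+3q^2-q-2$). *)

From mathcomp Require Import all_boot all_order all_algebra all_field.
Set Implicit Arguments. Unset Strict Implicit. Unset Printing Implicit Defensive.
Import Order.TTheory GRing.Theory Num.Theory.
Local Open Scope ring_scope.

(* Number of F_K-rational points of the (projective) elliptic curve y^2 = f(x):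
   the affine solutions plus the single point at infinity. *)
Definition ell_points (K : finFieldType) (f : {poly K}) : nat :=
  #|[set xy : K * K | xy.2 ^+ 2 == f.[xy.1]]|.+1.

Definition nroots (K : finFieldType) (f : {poly K}) : nat :=
  #|[set z : K | root f z]|.

Definition LE (NE X T gam : nat) : int :=
  2 * ((NE%:Z - (X + T + gam + 9)%:Z) %/ 4)%Z - 1.

Definition RE_max (NE X T gam : nat) : rat :=
  (LE NE X T gam)%:~R / ((LE NE X T gam)%:~R + (X + T + 8)%:R).

Definition mH (q X T : nat) : int :=
  (((q ^ 3 + q + 1)%:Z - (3 * q ^ 2)%:Z - (X + T)%:Z) %/ (2 * q)%:Z)%Z.

Definition LH (q X T : nat) : int :=
  mH q X T * q%:Z - ((q * (q - 1)) %/ 2)%:Z.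

Definition RH_max (q X T : nat) : rat :=
  (LH q X T)%:~R /
  ((LH q X T)%:~R + (X + T)%:R + (3 * q ^ 2)%:R - q%:R - 2).

From mathcomp Require Import all_boot all_order all_algebra all_field.
From mathcomp Require Import zify ring.
Import Order.TTheory GRing.Theory Num.Theory.
Local Open Scope ring_scope.

(* Only the point count #E = (q + 1)^2 and the trivial bound gamma <= q^2
   matter.  Both rates have the shape L / (L + D), so the claim is the cross
   inequality L^E D^H < L^H D^E.  With S = X + T, the floors give
   2 L^E <= q^2 + 2q - S - 10 and 2 L^H >= q^3 - 4q^2 + 2 - S, and the resulting
   polynomial inequality holds for q >= 7, S >= 3q + 6, except at q = 7,
   S = 27, where the exact values of the floors decide. *)

Lemma ltr_frac_addr (R : numFieldType) (a b u v : R) :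
  0 < a + u -> 0 < b + v -> (a / (a + u) < b / (b + v)) = (a * v < b * u).
Proof.
move=> au_gt0 bv_gt0.
rewrite ltr_pdivrMr // mulrAC ltr_pdivlMr // !mulrDr [b * a]mulrC.
by rewrite ltrD2l.
Qed.

Lemma cross_bound_lt {q S : int} :
  7 <= q -> 3 * q + 6 <= S -> (q, S) != (7, 27) ->
  (q ^+ 2 + 2 * q - S - 10) * (S + 3 * q ^+ 2 - q - 2) <
  (q ^+ 3 - 4 * q ^+ 2 + 2 - S) * (S + 8).
Proof.
move=> q_ge7 S_ge qS_neq; rewrite -subr_gt0.
have -> : (q ^+ 3 - 4 * q ^+ 2 + 2 - S) * (S + 8) -
          (q ^+ 2 + 2 * q - S - 10) * (S + 3 * q ^+ 2 - q - 2) =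
          (S - 3 * q - 6) * (q ^+ 3 - 2 * q ^+ 2 - 3 * q + 2) +
          (3 * q ^+ 3 - 19 * q ^+ 2 - 18 * q + 8) by ring.
have [q7|q_ge8] : q = 7 \/ 8 <= q by lia.
  (* the constant term is -20 at q = 7 *)
  by move: qS_neq; rewrite q7 xpair_eqE eqxx /= => /eqP S_neq; lia.
(* after the shift q = r + 8, S = s + 3q + 6 every coefficient is positive *)
pose r := q - 8; pose s := S - 3 * q - 6.
have -> : (S - 3 * q - 6) * (q ^+ 3 - 2 * q ^+ 2 - 3 * q + 2) +
          (3 * q ^+ 3 - 19 * q ^+ 2 - 18 * q + 8) =
          s * (r ^+ 3 + 22 * r ^+ 2 + 157 * r + 362) +
          (3 * r ^+ 3 + 53 * r ^+ 2 + 254 * r + 184) by rewrite /r /s; ring.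
have r_ge0 : 0 <= r by rewrite /r; lia.
have r2_ge0 : 0 <= r ^+ 2 by rewrite exprn_ge0.
have r3_ge0 : 0 <= r ^+ 3 by rewrite exprn_ge0.
have : 0 <= s * (r ^+ 3 + 22 * r ^+ 2 + 157 * r + 362).
  by apply: mulr_ge0; rewrite /s; lia.
lia.
Qed.

Lemma rate_cross_lt (q S a b m : int) :
  7 <= q -> 3 * q + 6 <= S ->
  2 * a <= q ^+ 2 + 2 * q - S - 10 ->
  q ^+ 3 - 3 * q ^+ 2 + q + 1 - S < 2 * q * (m + 1) ->
  2 * q * m - q * (q - 1) <= 2 * b ->
  a * (S + 3 * q ^+ 2 - q - 2) < b * (S + 8).
Proof.
move=> q_ge7 S_ge a_ub m_gt b_ge.
case: (eqVneq (q, S) (7, 27)) => [[q7 S7] | qS_neq].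
  (* here m >= 12 forces b >= 63, while a <= 13 *)
  by move: a_ub m_gt b_ge; rewrite q7 S7; lia.
have b_lb : q ^+ 3 - 4 * q ^+ 2 + 2 - S <= 2 * b by lia.
have D1_gt0 : 0 < S + 3 * q ^+ 2 - q - 2 by nia.
have D2_gt0 : 0 < S + 8 by lia.
have aD1_ub := ler_wpM2r (ltW D1_gt0) a_ub.
have bD2_lb := ler_wpM2r (ltW D2_gt0) b_lb.
have := cross_bound_lt q_ge7 S_ge qS_neq.
rewrite -!mulrA in aD1_ub bD2_lb; lia.
Qed.

Lemma PoszX (n k : nat) : (n ^ k)%:Z = n%:Z ^+ k.
Proof. by rewrite -!natz natrX. Qed.

Lemma LE_bounds (NE X T g : nat) :
  NE%:Z - (X + T + g)%:Z - 15 < 2 * LE NE X T g <= NE%:Z - (X + T + g)%:Z - 11.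
Proof.
rewrite /LE; set D := (_ - _)%R.
have := divz_eq D 4; have := modz_ge0 D (isT : 4 != 0 :> int).
have := ltz_pmod D (isT : 0 < 4 :> int).
rewrite /D; lia.
Qed.

Lemma mH_floor (q X T : nat) : (0 < q)%N ->
  q%:Z ^+ 3 - 3 * q%:Z ^+ 2 + q%:Z + 1 - (X + T)%:Z < 2 * q%:Z * (mH q X T + 1).
Proof.
move=> q_gt0; rewrite /mH; set A := (_ - _ - _)%R.
have q2_gt0 : 0 < (2 * q)%:Z by lia.
have := divz_eq A (2 * q)%:Z; have := ltz_pmod A q2_gt0.
rewrite /A !PoszD PoszM !PoszX; lia.
Qed.

Lemma LH_ge (q X T : nat) :
  2 * q%:Z * mH q X T - q%:Z * (q%:Z - 1) <= 2 * LH q X T.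
Proof.
rewrite /LH; have := leq_divM (q * (q - 1)) 2.
nia.
Qed.

Theorem proposition4p8
  (p h : nat) (K : finFieldType) (f : {poly K}) (X T : nat) :
  prime p -> (3 < p)%N ->
  let q := (p ^ h)%N in
  (7 <= q)%N ->
  (0 < X)%N -> (0 < T)%N -> (3 * (q + 2) <= X + T)%N ->
  #|K| = (q ^ 2)%N ->
  size f = 4%N ->
  coprimep f f^`() ->
  ell_points f = (q ^ 2 + 1 + 2 * q)%N ->
  RH_max q X T > RE_max (ell_points f) X T (nroots f).
Proof.
move=> _ _ q q_ge7 _ _ S_ge card_K _ _ NE_eq; clearbody q.
have q_gt0 : (0 < q)%N by apply: leq_trans q_ge7.
have q2 := PoszX q 2.
have g_le : (nroots f <= q ^ 2)%N by rewrite /nroots -card_K max_card.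
have /andP[a_gt a_ub] := LE_bounds (ell_points f) X T (nroots f).
have m_gt := mH_floor q X T q_gt0.
have b_ge := LH_ge q X T.
rewrite /RE_max /RH_max NE_eq in a_gt a_ub *.
set a := LE _ _ _ _ in a_gt a_ub *; set b := LH q X T in b_ge *.
have -> : (X + T + 8)%:R = ((X + T)%:Z + 8)%:~R :> rat by ring.
have -> : b%:~R + (X + T)%:R + (3 * q ^ 2)%:R - q%:R - 2 =
          b%:~R + ((X + T)%:Z + 3 * q%:Z ^+ 2 - q%:Z - 2)%:~R :> rat by ring.
rewrite ltr_frac_addr -?intrD ?ltr0z -?intrM ?ltr_int.
- by apply: (rate_cross_lt q (X + T)%:Z _ _ (mH q X T)); lia.
- lia.
- nia.
Qed.
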